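(* For every $n\geq 3$, the $n$-dimensional hypercube $H_n$, as an instance of Bipartite Influence, satisfies $H_n=0$.
   Context: $H_n$ has vertex set $\{0,1\}^n$, two vertices adjacent iff they differ in exactly one coordinate; a vertex is black if it has an odd number of nonzero coordinates and white otherwise. Bipartite Influence: on a bipartite graph with black and white vertices (edges between colours), isolated vertices are credited to the owner of their colour (black to Left, white to Right); Left picks a black vertex $x$ and removes $x$, its neighbours and the vertices that become isolated (credited to her); Right likewise with white vertices; score = Left's total minus Right's. $G=0$ means $Ls(G+X)=Ls(X)$ and $Rs(G+X)=Rs(X)$ for every position $X$ (disjoint union as sum), where $Ls,Rs$ are the optimal scores with Left, resp. Right, moving first. *)

From mathcomp Require Import all_boot all_order all_algebra.
Set Implicit Arguments. Unset Strict Implicit. Unset Printing Implicit Defensive.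
Import Order.TTheory GRing.Theory Num.Theory.
Local Open Scope ring_scope.

(* A Bipartite Influence position: a finite vertex type T, an adjacency
   relation e (a simple graph when symmetric and irreflexive), and a colouring
   c : T -> bool, with c v = true meaning v is black (Left's colour) and
   c v = false meaning v is white (Right's colour). *)

Section Game.
Variables (T : finType) (e : rel T) (c : T -> bool).

Definition isoIn (S : {set T}) (v : T) : bool := [forall u, (u \in S) ==> ~~ e v u].

Definition active (S : {set T}) : {set T} := [set v in S | ~~ isoIn S v].

Definition credit (S : {set T}) : int :=
  \sum_(v in S | isoIn S v) (if c v then 1 else -1).

Definition after (S : {set T}) (x : T) : {set T} :=
  active (S :\: (x |: [set y in S | e x y])).

Definition gain (S : {set T}) (x : T) : int := (#|S :\: after S x|)%:Z.

(* optimal score (Left minus Right) of the remaining game on S, with Left to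
   move if b = true and Right to move if b = false; fuel bounds the number of
   moves.  A player with no legal move ends the game (this never matters:
   if S has no black vertex it has no edge, hence no white vertex either). *)
Fixpoint play (fuel : nat) (S : {set T}) (b : bool) : int :=
  match fuel with
  | 0 => 0
  | k.+1 =>
    let vals := [seq (if b then gain S x else - gain S x) + play k (after S x) (~~ b)
                | x <- enum T & (x \in S) && (c x == b)] in
    match vals with
    | [::] => 0
    | v :: r => if b then foldr Num.max v r else foldr Num.min v r
    end
  end.

Definition Ls : int := credit setT + play #|T| (active setT) true.
Definition Rs : int := credit setT + play #|T| (active setT) false.

End Game.

Definition sum_rel (T1 T2 : finType) (e1 : rel T1) (e2 : rel T2) : rel (T1 + T2)%type :=
  fun x y => match x, y with
             | inl a, inl b => e1 a b
             | inr a, inr b => e2 a b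
             | _, _ => false
             end.

Definition sum_col (T1 T2 : finType) (c1 : T1 -> bool) (c2 : T2 -> bool) : (T1 + T2)%type -> bool :=
  fun x => match x with inl a => c1 a | inr b => c2 b end.

Definition bip_position (T : finType) (e : rel T) (c : T -> bool) : Prop :=
  [/\ symmetric e, irreflexive e & forall x y, e x y -> c x != c y].

Definition hcube (n : nat) : finType := {ffun 'I_n -> bool}.
Definition hc_adj (n : nat) : rel (hcube n) :=
  fun f g => #|[set i | f i != g i]| == 1%N.
Definition hc_col (n : nat) : hcube n -> bool :=
  fun f => odd #|[set i | f i]|.

Definition game_zero (T : finType) (e : rel T) (c : T -> bool) : Prop :=
  forall (X : finType) (eX : rel X) (cX : X -> bool), bip_position eX cX ->
    Ls (sum_rel e eX) (sum_col c cX) = Ls eX cX /\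
    Rs (sum_rel e eX) (sum_col c cX) = Rs eX cX.

From mathcomp Require Import all_boot all_order all_algebra.
From mathcomp Require Import zify.
Set Implicit Arguments. Unset Strict Implicit. Unset Printing Implicit Defensive.
Import Order.TTheory GRing.Theory Num.Theory.
Local Open Scope ring_scope.

(* Let s flip the first three coordinates.  It is an automorphism of H_n that
   swaps the colours, and x and s x are never adjacent (they are at distance 3).
   So in H_n + X the second player can answer every move x in H_n with s x: the
   answer is still legal, removes as many vertices as x did, and leaves an
   s-invariant position again.  This mirror strategy gives Ls(H_n + X) <= Ls(X)
   and Rs(X) <= Rs(H_n + X); conversely the first player can open with an
   optimal move of X.  When X has no move, one needs that moving first never
   hurts in Bipartite Influence (Rs <= Ls), which follows by induction from the
   fact that a free extra move never hurts its owner. *)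

Section Position.
Variables (T : finType) (e : rel T) (c : T -> bool).
Implicit Types (S P A B : {set T}) (x y z u v : T).

Definition has_nbr S v := [exists u, (u \in S) && e v u].

Definition cnbhd S x := x |: [set y in S | e x y].

Definition removed S x := S :\: after e S x.

Lemma has_nbrP S v : reflect (exists2 u, u \in S & e v u) (has_nbr S v).
Proof.
apply: (iffP existsP) => [[u /andP[uS evu]]|[u uS evu]]; exists u => //.
exact/andP.
Qed.

Lemma isoInE S v : isoIn e S v = ~~ has_nbr S v.
Proof.
rewrite /isoIn negb_exists; apply: eq_forallb => u.
by rewrite negb_and implybE.
Qed.

Lemma in_active S v : (v \in active e S) = (v \in S) && has_nbr S v.
Proof. by rewrite inE isoInE negbK. Qed.

Lemma in_cnbhd S x v : (v \in cnbhd S x) = (v == x) || (v \in S) && e x v.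
Proof. by rewrite !inE. Qed.

Lemma afterE S x : after e S x = active e (S :\: cnbhd S x).
Proof. by []. Qed.

Lemma in_after S x v :
  (v \in after e S x) = [&& v \notin cnbhd S x, v \in S & has_nbr (S :\: cnbhd S x) v].
Proof. by rewrite afterE in_active in_setD andbA. Qed.

Lemma after_sub S x : after e S x \subset S.
Proof. by apply/subsetP => v; rewrite in_after => /and3P[]. Qed.

Lemma after_notin S x : x \notin after e S x.
Proof. by rewrite in_after in_cnbhd eqxx. Qed.

Lemma card_after S x : x \in S -> (#|after e S x| < #|S|)%N.
Proof.
move=> xS; apply/proper_card/properP; split; first exact: after_sub.
by exists x; last exact: after_notin.
Qed.

Lemma gainE S x : gain e S x = #|removed S x|%:Z.
Proof. by []. Qed.

Lemma gain_after S x y :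
  gain e S x + gain e (after e S x) y = #|S :\: after e (after e S x) y|%:Z.
Proof.
have [sub1 sub2] := (after_sub S x, after_sub (after e S x) y).
rewrite !gainE /removed !cardsD !(setIidPr _) ?(subset_trans sub2) //.
have := subset_leq_card sub1; have := subset_leq_card sub2; lia.
Qed.

Lemma gain_stale P y : after e P y = P -> gain e P y = 0.
Proof. by move=> PyP; rewrite gainE /removed PyP setDv cards0. Qed.

Lemma setD_cnbhd_sub S' S y : S' \subset S -> S' :\: cnbhd S' y = S' :\: cnbhd S y.
Proof.
move=> /subsetP sub; apply/setP => v; rewrite !inE.
by case vS: (v \in S'); rewrite ?andbF // (sub v vS).
Qed.

Hypothesis e_sym : symmetric e.

Lemma activeK S : active e (active e S) = active e S.
Proof.
apply/setP => v; rewrite [LHS]in_active; apply/andb_idr => vA.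
move: (vA); rewrite in_active => /andP[vS /has_nbrP[u uS evu]].
apply/has_nbrP; exists u => //; rewrite in_active uS; apply/has_nbrP.
by exists v; rewrite // e_sym.
Qed.

Lemma after_active S x : active e (after e S x) = after e S x.
Proof. exact: activeK. Qed.

Lemma active_setD A B : active e (active e A :\: B) = active e (A :\: B).
Proof.
apply/setP => v; rewrite !in_active !in_setD in_active; apply/idP/idP.
  case/andP=> /andP[vB /andP[vA _]] /has_nbrP[u]; rewrite !in_setD in_active.
  case/andP=> uB /andP[uA _] evu; rewrite vB vA.
  by apply/has_nbrP; exists u; rewrite ?in_setD ?uB.
case/andP=> /andP[vB vA] /has_nbrP[u]; rewrite in_setD => /andP[uB uA] evu.
rewrite vB vA; apply/andP; split; first by apply/has_nbrP; exists u; rewrite ?in_setD ?uB.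
apply/has_nbrP; exists u => //; rewrite !in_setD uB in_active uA.
by apply/has_nbrP; exists v; rewrite // e_sym.
Qed.

Lemma after_after S x y :
  after e (after e S x) y = active e (S :\: cnbhd S x :\: cnbhd S y).
Proof. by rewrite afterE (setD_cnbhd_sub _ (after_sub S x)) afterE active_setD. Qed.

Lemma after_comm S x y : after e (after e S x) y = after e (after e S y) x.
Proof. by rewrite !after_after !setDDl setUC. Qed.

Lemma gain_after_comm S x y :
  gain e S x + gain e (after e S x) y = gain e S y + gain e (after e S y) x.
Proof. by rewrite !gain_after after_comm. Qed.

Lemma removed_nbr_in_cnbhd S z v u : v \in removed S z -> v \notin cnbhd S z ->
  u \in S -> e v u -> u \in cnbhd S z.
Proof.
rewrite in_setD in_after => /andP[+ vS] vNz uS evu; rewrite vNz vS /=.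
by apply: contraNT => uNz; apply/has_nbrP; exists u; rewrite // in_setD uNz.
Qed.

Lemma cnbhd_has_nbr S z v : active e S = S -> z \in S -> v \in cnbhd S z ->
  exists2 u, u \in cnbhd S z & (u \in S) && e v u.
Proof.
move=> SA zS; rewrite in_cnbhd => /orP[/eqP->|/andP[_ ezv]].
  have : z \in active e S by rewrite SA.
  rewrite in_active => /andP[_ /has_nbrP[u uS ezu]].
  by exists u; rewrite ?uS // in_cnbhd uS ezu orbT.
by exists z; rewrite ?in_cnbhd ?eqxx // zS e_sym.
Qed.

Hypothesis e_bip : forall x y, e x y -> c x != c y.

Lemma after_stale S x y : c x = c y -> y \in S -> y \notin after e S x ->
  after e (after e S x) y = after e S x.
Proof.
move=> cxy yS yx.
have no_nbr : [set u in after e S x | e y u] = set0.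
  apply/setP => u; rewrite in_set0 inE in_after; apply/negP => /andP[/and3P[ux uS _] eyu].
  have [yx_eq|ynx] := eqVneq y x.
    by move: ux; rewrite in_cnbhd uS -yx_eq eyu orbT.
  have yN : y \notin cnbhd S x.
    rewrite in_cnbhd (negbTE ynx) yS /=; apply/negP => /e_bip.
    by rewrite cxy eqxx.
  move: yx; rewrite in_after yN yS /= => /has_nbrP; apply.
  by exists u; rewrite // in_setD ux uS.
rewrite afterE /cnbhd no_nbr setU0 (setDidPl _) ?after_active //.
by rewrite disjoint_sym disjoints1.
Qed.

Lemma sub_removed S x y : c x != c y -> removed (after e S x) y \subset removed S y.
Proof.
move=> cxy; apply/subsetP => v; rewrite !in_setD => /andP[vxy vx].
move: (vx); rewrite in_after => /and3P[vNx vS /has_nbrP[u]].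
rewrite in_setD => /andP[uNx uS] evu; rewrite vS andbT.
apply/negP; rewrite in_after => /and3P[vNy _ /has_nbrP[w]].
rewrite in_setD => /andP[wNy wS] evw.
have vxy_nbr z : z \in S -> e v z -> (z \in cnbhd S x) || (z \in cnbhd S y).
  move=> zS evz; apply/contraT; rewrite negb_or => /andP[zNx zNy].
  move: vxy; rewrite after_after in_active !in_setD vNy vNx vS /=.
  by case/negP; apply/has_nbrP; exists z; rewrite // !in_setD zNy zNx.
have := vxy_nbr w wS evw; rewrite (negbTE wNy) orbF in_cnbhd.
case/orP=> [/eqP wx|/andP[_ exw]].
  by move: vNx; rewrite in_cnbhd vS -wx e_sym evw orbT.
have := vxy_nbr u uS evu; rewrite (negbTE uNx) /= in_cnbhd.
case/orP=> [/eqP uy|/andP[_ eyu]].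
  by move: vNy; rewrite in_cnbhd vS -uy e_sym evu orbT.
move: (e_bip exw) (e_bip evw) (e_bip eyu) (e_bip evu) cxy.
by case: (c x); case: (c y); case: (c v); case: (c w); case: (c u).
Qed.

Lemma gain_after_le S x y : c x != c y -> gain e (after e S x) y <= gain e S y.
Proof. by move=> cxy; rewrite !gainE lez_nat subset_leq_card ?sub_removed. Qed.

Lemma in_after_swap S x y : active e S = S -> x \in S -> y \in after e S x ->
  c x != c y -> x \in after e S y.
Proof.
move=> SA xS yx cxy; move: (yx); rewrite in_after => /and3P[yNx yS _].
have xNy : x \notin cnbhd S y.
  rewrite in_cnbhd xS negb_or eq_sym; apply/andP; split.
    by apply: contraNneq yNx => ->; rewrite in_cnbhd eqxx.
  by apply: contraNN yNx => eyx; rewrite in_cnbhd yS e_sym eyx orbT.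
have : x \in active e S by rewrite SA.
rewrite in_after xNy xS in_active => /andP[_ /has_nbrP[w wS exw]].
apply/has_nbrP; exists w => //; rewrite in_setD wS andbT in_cnbhd negb_or.
apply/andP; split.
  by apply: contraNneq yNx => wy; rewrite in_cnbhd yS -wy exw orbT.
rewrite wS /=; apply/negP => eyw.
move: (e_bip exw) (e_bip eyw) cxy.
by case: (c x); case: (c y); case: (c w).
Qed.

Definition legal S b x := (x \in S) && (c x == b).

Lemma no_legal_set0 S b : active e S = S -> (forall x, ~~ legal S b x) -> S = set0.
Proof.
move=> SA nolegal; apply/setP => v; rewrite inE; apply/negP => vS.
have : v \in active e S by rewrite SA.
rewrite in_active => /andP[_ /has_nbrP[u uS evu]].
have := e_bip evu; have := nolegal v; have := nolegal u; rewrite /legal vS uS /=.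
by case: (c u); case: (c v); case: (b).
Qed.

Lemma legal_opposite S b x : active e S = S -> legal S b x -> exists y, legal S (~~ b) y.
Proof.
move=> SA /andP[xS /eqP cx]; have : x \in active e S by rewrite SA.
rewrite in_active => /andP[_ /has_nbrP[y yS exy]]; exists y.
by move: (e_bip exy); rewrite /legal yS cx; case: (c y); case: (b).
Qed.

End Position.

Section FoldrMaxMin.
Variables (d : Order.disp_t) (R : orderType d) (v : R) (r : seq R).

Lemma foldr_max_in : foldr Order.max v r \in v :: r.
Proof.
elim: r => [|a s IH] /=; first exact: mem_head.
rewrite maxEle; case: ifP => _; rewrite !inE ?eqxx ?orbT //.
by move: IH; rewrite inE => /orP[/eqP->|H]; rewrite ?eqxx ?H ?orbT.
Qed.

Lemma foldr_min_in : foldr Order.min v r \in v :: r.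
Proof.
elim: r => [|a s IH] /=; first exact: mem_head.
rewrite minEle; case: ifP => _; rewrite !inE ?eqxx ?orbT //.
by move: IH; rewrite inE => /orP[/eqP->|H]; rewrite ?eqxx ?H ?orbT.
Qed.

Lemma foldr_max_ge w : w \in v :: r -> (w <= foldr Order.max v r)%O.
Proof.
elim: r w => [|a s IH] w /=; first by rewrite inE => /eqP->.
rewrite !inE le_max => /or3P[/eqP->|/eqP->|ws].
- by rewrite IH ?orbT // mem_head.
- by rewrite lexx.
- by rewrite IH ?orbT // inE ws orbT.
Qed.

Lemma foldr_min_le w : w \in v :: r -> (foldr Order.min v r <= w)%O.
Proof.
elim: r w => [|a s IH] w /=; first by rewrite inE => /eqP->.
rewrite !inE ge_min => /or3P[/eqP->|/eqP->|ws].
- by rewrite IH ?orbT // mem_head.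
- by rewrite lexx.
- by rewrite IH ?orbT // inE ws orbT.
Qed.

End FoldrMaxMin.

Section Value.
Variables (T : finType) (e : rel T) (c : T -> bool).
Implicit Types (S : {set T}) (x : T).

Lemma legal_moves_nil S b :
  (forall x, ~~ legal c S b x) -> [seq x <- enum T | legal c S b x] = [::].
Proof.
by move=> nolegal; rewrite (@eq_filter _ _ pred0) ?filter_pred0 // => x; exact/negbTE.
Qed.

Lemma play_set0 k b : play e c k set0 b = 0.
Proof.
case: k => //= k.
by rewrite [filter _ _](@legal_moves_nil set0 b) // => x; rewrite /legal inE.
Qed.

Lemma play_fuel k1 k2 S b : (#|S| <= k1)%N -> (#|S| <= k2)%N ->
  play e c k1 S b = play e c k2 S b.
Proof.
elim: k1 k2 S b => [|k IH] [|j] S b //.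
- by rewrite leqn0 cards_eq0 => /eqP-> _; rewrite !play_set0.
- by rewrite leqn0 cards_eq0 => _ /eqP->; rewrite !play_set0.
move=> Sk Sj /=; set l1 := map _ _; set l2 := map _ _; suff -> : l1 = l2 by [].
apply/eq_in_map => x; rewrite mem_filter => /andP[/andP[xS _] _].
have := card_after e xS => ?; congr (_ + _); apply: IH; lia.
Qed.

Definition value S b := play e c #|T| S b.

Lemma value_set0 b : value set0 b = 0.
Proof. exact: play_set0. Qed.

Lemma LsE : Ls e c = credit e c setT + value (active e setT) true.
Proof. by []. Qed.

Lemma RsE : Rs e c = credit e c setT + value (active e setT) false.
Proof. by []. Qed.

Definition move_value S b x :=
  (if b then gain e S x else - gain e S x) + value (after e S x) (~~ b).

Lemma valueE S b : value S b =
  match [seq move_value S b x | x <- enum T & legal c S b x] with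
  | [::] => 0
  | v :: r => if b then foldr Num.max v r else foldr Num.min v r
  end.
Proof.
rewrite /value; case HT: #|T| => [|k].
  by rewrite (size0nil (_ : size (enum T) = 0%N)) // -cardE.
rewrite /=; set l1 := map _ _; set l2 := map _ _; suff -> : l1 = l2 by [].
apply/eq_in_map => x; rewrite mem_filter => /andP[/andP[xS _] _].
have := card_after e xS; have := max_card S => ? ?.
congr (_ + _); apply: play_fuel; lia.
Qed.

Lemma value_no_legal S b : (forall x, ~~ legal c S b x) -> value S b = 0.
Proof. by move=> nolegal; rewrite valueE legal_moves_nil. Qed.

Lemma move_value_in S b x : legal c S b x ->
  move_value S b x \in [seq move_value S b x | x <- enum T & legal c S b x].
Proof. by move=> Lx; apply: map_f; rewrite mem_filter Lx mem_enum. Qed.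

Lemma value_attained S b x0 : legal c S b x0 ->
  exists2 x, legal c S b x & value S b = move_value S b x.
Proof.
move=> /move_value_in; rewrite valueE.
case E: [seq move_value S b x | x <- _ & _] => [//|v r] _.
have : (if b then foldr Num.max v r else foldr Num.min v r) \in v :: r.
  by case: (b); [exact: foldr_max_in | exact: foldr_min_in].
by rewrite -E => /mapP[x]; rewrite mem_filter => /andP[Lx _] ->; exists x.
Qed.

Lemma move_value_le_value S x : legal c S true x -> move_value S true x <= value S true.
Proof.
move=> /move_value_in; rewrite valueE.
by case: [seq move_value S true x | x <- _ & _] => [//|v r]; exact: foldr_max_ge.
Qed.

Lemma value_le_move_value S x : legal c S false x -> value S false <= move_value S false x.
Proof.
move=> /move_value_in; rewrite valueE.
by case: [seq move_value S false x | x <- _ & _] => [//|v r]; exact: foldr_min_le.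
Qed.

Lemma value_le_card S b : value S b <= #|S|%:Z.
Proof.
elim: {S}_.+1 {-2}S (ltnSn #|S|) b => // k IH S Sk b.
have [x0 Lx0|nolegal] := pickP (legal c S b); last first.
  by rewrite value_no_legal // => x; rewrite nolegal.
have [x /andP[xS _] ->] := value_attained Lx0.
have := IH (after e S x) (leq_trans (card_after e xS) Sk) (~~ b).
rewrite /move_value gainE /removed cardsD (setIidPr (after_sub e S x)).
have := subset_leq_card (after_sub e S x); case: (b) => /=; lia.
Qed.

End Value.

Section NoZugzwang.
Variables (T : finType) (e : rel T) (c : T -> bool).
Hypotheses (e_sym : symmetric e) (e_bip : forall x y, e x y -> c x != c y).
Implicit Types (S : {set T}) (x y : T).
Local Notation value := (value e c).

Definition free_left_move_helps b S :=
  forall x, legal c S true x -> value S b <= gain e S x + value (after e S x) b.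

Lemma free_left_move_helps_right_first S : active e S = S ->
  (forall y, y \in S -> free_left_move_helps true (after e S y)) -> free_left_move_helps false S.
Proof.
move=> SA helps_after x /andP[xS /eqP cx].
have [y0 Ly0|nolegal] := pickP (legal c (after e S x) false); last first.
  have Sx0 : after e S x = set0.
    apply: (no_legal_set0 e_bip (b := false)) => [|y]; last by rewrite nolegal.
    exact: after_active.
  by rewrite gainE /removed Sx0 value_set0 addr0 setD0 (value_le_card e).
have [y /andP[yx /eqP cy] ->] := value_attained e Ly0.
have yS : y \in S := subsetP (after_sub e S x) y yx.
have cxy : c x != c y by rewrite cx cy.
have xy : x \in after e S y := in_after_swap e_sym e_bip SA xS yx cxy.
have Sy : value S false <= - gain e S y + value (after e S y) true.
  by apply: (value_le_move_value e); rewrite /legal yS cy.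
have Syx : value (after e S y) true <=
           gain e (after e S y) x + value (after e (after e S y) x) true.
  by apply: helps_after; rewrite // /legal xy cx.
have := gain_after_le e_sym e_bip S cxy; have := gain_after_comm e_sym S x y.
move: Sy Syx; rewrite /move_value /= (after_comm e_sym S y x); lia.
Qed.

Lemma right_first_le_left_first S : active e S = S -> free_left_move_helps false S ->
  value S false <= value S true.
Proof.
move=> SA helpsS; have [x Lx|nolegal] := pickP (legal c S true).
  by apply: le_trans (helpsS x Lx) (move_value_le_value e Lx).
have -> : S = set0 by apply: (no_legal_set0 e_bip (b := true)) => // x; rewrite nolegal.
by rewrite !value_set0.
Qed.

Lemma free_left_move_helps_left_first S :
  (forall x, x \in S ->
     free_left_move_helps false (after e S x) /\
     value (after e S x) false <= value (after e S x) true) ->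
  free_left_move_helps true S.
Proof.
move=> IH x Lx; have /andP[xS /eqP cx] := Lx.
have [x' Lx' ->] := value_attained e Lx; have /andP[x'S /eqP cx'] := Lx'.
have cxx' : c x = c x' by rewrite cx cx'.
have [helps_x' _] := IH x' x'S; have [_ LR_x] := IH x xS.
(* Compare Left's best opening x' with the line "x, then x'": as x and x' have
   the same colour, x' is either still legal after x or a void move there. *)
have Hx' : value (after e S x') false <=
           gain e (after e S x') x + value (after e (after e S x') x) false.
  have [xx'|xNx'] := boolP (x \in after e S x'); first by apply: helps_x'; rewrite /legal xx' cx.
  have stale := after_stale e_sym e_bip (esym cxx') xS xNx'.
  by rewrite stale (gain_stale stale) add0r.
have Hx : gain e (after e S x) x' + value (after e (after e S x) x') false <=
          value (after e S x) true.
  have [x'x|x'Nx] := boolP (x' \in after e S x).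
    by apply: (move_value_le_value e); rewrite /legal x'x cx'.
  have stale := after_stale e_sym e_bip cxx' x'S x'Nx.
  by rewrite stale (gain_stale stale) add0r.
have := gain_after_comm e_sym S x x'.
move: Hx Hx'; rewrite /move_value /= (after_comm e_sym S x' x); lia.
Qed.

Lemma free_left_move_helps_and_value_le S : active e S = S ->
  [/\ free_left_move_helps false S, value S false <= value S true & free_left_move_helps true S].
Proof.
elim: {S}_.+1 {-2}S (ltnSn #|S|) => // k IH S Sk SA.
have IHx x : x \in S -> [/\ free_left_move_helps false (after e S x),
    value (after e S x) false <= value (after e S x) true &
    free_left_move_helps true (after e S x)].
  by move=> xS; apply: IH; [exact: leq_trans (card_after e xS) Sk | exact: after_active].
have gains_false : free_left_move_helps false S.
  by apply: free_left_move_helps_right_first => // y /IHx[].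
split=> //; first exact: right_first_le_left_first.
by apply: free_left_move_helps_left_first => x /IHx[].
Qed.

Theorem value_right_first_le S : active e S = S -> value S false <= value S true.
Proof. by case/free_left_move_helps_and_value_le. Qed.

End NoZugzwang.

Section Mirror.
Variables (T : finType) (e : rel T) (c : T -> bool).
Hypotheses (e_sym : symmetric e) (e_bip : forall x y, e x y -> c x != c y).
Variable sg : T -> T.
Hypotheses (sgK : involutive sg) (sg_adj : forall x y, e (sg x) (sg y) = e x y)
  (sg_col : forall x, c (sg x) = ~~ c x) (sg_nadj : forall x, ~~ e x (sg x)).
Implicit Types (S P : {set T}) (x y u v : T).

Definition sg_stable S := sg @^-1: S = S.

Let sg_inj : injective sg := inv_inj sgK.

Lemma has_nbr_sg P v : has_nbr e P (sg v) = has_nbr e (sg @^-1: P) v.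
Proof.
apply/has_nbrP/has_nbrP => -[u uP evu].
  by exists (sg u); rewrite ?inE ?sgK // -sg_adj sgK.
by rewrite inE in uP; exists (sg u); rewrite ?sg_adj.
Qed.

Lemma preim_active P : sg @^-1: active e P = active e (sg @^-1: P).
Proof. by apply/setP => v; rewrite inE !in_active has_nbr_sg inE. Qed.

Lemma preim_cnbhd P y : sg @^-1: cnbhd e P (sg y) = cnbhd e (sg @^-1: P) y.
Proof. by apply/setP => u; rewrite inE !in_cnbhd inE (inj_eq sg_inj) sg_adj. Qed.

Lemma preim_after P y : sg @^-1: after e P (sg y) = after e (sg @^-1: P) y.
Proof. by rewrite !afterE preim_active preimsetD preim_cnbhd. Qed.

Lemma notin_cnbhd_sg S x u : u \in cnbhd e S x -> u \notin cnbhd e S (sg x).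
Proof.
rewrite !in_cnbhd negb_or negb_and => /orP[/eqP->|/andP[_ exu]]; apply/andP; split.
- by apply/negP => /eqP ux; move: (sg_col x); rewrite -ux; case: (c x).
- by rewrite e_sym sg_nadj orbT.
- by apply: contraNneq (sg_nadj x) => <-.
- apply/orP; right; apply/negP => eu.
  by move: (e_bip exu) (e_bip eu); rewrite sg_col; case: (c x); case: (c u).
Qed.

Lemma removed_sg_disjoint S x : active e S = S -> x \in S -> sg x \in S ->
  removed e S x :&: removed e S (sg x) = set0.
Proof.
move=> SA xS sxS; apply/setP => v; rewrite in_set0 in_setI.
apply/negP => /andP[vx vsx]; have vS : v \in S by move: vx; rewrite in_setD => /andP[].
have [vN1|vN1] := boolP (v \in cnbhd e S x); have [vN2|vN2] := boolP (v \in cnbhd e S (sg x)).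
- by move: (notin_cnbhd_sg vN1); rewrite vN2.
- have [u uN1 /andP[uS evu]] := cnbhd_has_nbr e_sym SA xS vN1.
  by move: (notin_cnbhd_sg uN1); rewrite (removed_nbr_in_cnbhd vsx vN2 uS evu).
- have [u uN2 /andP[uS evu]] := cnbhd_has_nbr e_sym SA sxS vN2.
  by move: (notin_cnbhd_sg uN2); rewrite sgK (removed_nbr_in_cnbhd vx vN1 uS evu).
- have : v \in active e S by rewrite SA.
  rewrite in_active vS => /has_nbrP[u uS evu].
  have uN1 := removed_nbr_in_cnbhd vx vN1 uS evu.
  by move: (notin_cnbhd_sg uN1); rewrite (removed_nbr_in_cnbhd vsx vN2 uS evu).
Qed.

Lemma sg_in_after S x : active e S = S -> sg_stable S -> x \in S -> sg x \in after e S x.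
Proof.
move=> SA SI xS; have sxS : sg x \in S by rewrite -SI inE sgK.
have sxN : sg x \in cnbhd e S (sg x) by rewrite in_cnbhd eqxx.
have := notin_cnbhd_sg sxN; rewrite sgK => sxNx.
have : sg x \in active e S by rewrite SA.
rewrite in_after sxNx sxS in_active => /andP[_ /has_nbrP[w wS ew]].
apply/has_nbrP; exists w => //; rewrite in_setD wS andbT.
by rewrite -{1}[x]sgK notin_cnbhd_sg // in_cnbhd wS ew orbT.
Qed.

Lemma preim_after_sg S x : sg_stable S -> sg @^-1: after e S x = after e S (sg x).
Proof. by move=> SI; rewrite -{1}[x]sgK preim_after SI. Qed.

Lemma gain_sg S x : sg_stable S -> gain e S (sg x) = gain e S x.
Proof.
move=> SI; rewrite !gainE /removed -preim_after_sg // -{1}SI -preimsetD.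
by rewrite card_preimset.
Qed.

Lemma gain_after_sg S x : active e S = S -> sg_stable S -> x \in S ->
  gain e (after e S x) (sg x) = gain e S x.
Proof.
move=> SA SI xS; have sxS : sg x \in S by rewrite -SI inE sgK.
have cx : c x != c (sg x) by rewrite sg_col; case: (c x).
apply/eqP; rewrite eq_le -{1}(gain_sg x SI) (gain_after_le e_sym e_bip _ cx) /=.
have : removed e S x :|: removed e S (sg x) \subset S :\: after e (after e S x) (sg x).
  apply/subUsetP; split; apply: setDS; first exact: after_sub.
  by rewrite after_comm // after_sub.
move/subset_leq_card; rewrite cardsU removed_sg_disjoint // cards0 subn0.
move: (gain_after e S x (sg x)) (gain_sg x SI); rewrite !gainE; lia.
Qed.

Lemma sg_stable_after_sg S x : sg_stable S -> sg_stable (after e (after e S x) (sg x)).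
Proof. by move=> SI; rewrite /sg_stable preim_after preim_after_sg // after_comm. Qed.

End Mirror.

Section SumPosition.
Variables (T1 T2 : finType) (e1 : rel T1) (e2 : rel T2).
Variables (c1 : T1 -> bool) (c2 : T2 -> bool).
Local Notation es := (sum_rel e1 e2).
Local Notation cs := (sum_col c1 c2).
Implicit Types (A : {set T1}) (B : {set T2}).

Definition sum_set A B : {set T1 + T2} :=
  [set z | match z with inl a => a \in A | inr b => b \in B end].

Lemma sum_rel_sym : symmetric e1 -> symmetric e2 -> symmetric es.
Proof. by move=> e1_sym e2_sym [a|a] [b|b] //=; rewrite ?e1_sym ?e2_sym. Qed.

Lemma sum_rel_bip : (forall x y, e1 x y -> c1 x != c1 y) ->
  (forall x y, e2 x y -> c2 x != c2 y) -> forall x y, es x y -> cs x != cs y.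
Proof. by move=> e1_bip e2_bip [a|a] [b|b] //=; [exact: e1_bip | exact: e2_bip]. Qed.

Lemma sum_setT : [set: T1 + T2] = sum_set setT setT.
Proof. by apply/setP => -[a|b]; rewrite !inE. Qed.

Lemma card_sum_set A B : #|sum_set A B| = (#|A| + #|B|)%N.
Proof.
by rewrite -!sum1_card big_sumType /=; congr (_ + _)%N; apply: eq_bigl => ?; rewrite inE.
Qed.

Lemma sum_setD A B A' B' : sum_set A B :\: sum_set A' B' = sum_set (A :\: A') (B :\: B').
Proof. by apply/setP => -[a|b]; rewrite !inE. Qed.

Lemma has_nbr_suml A B a : has_nbr es (sum_set A B) (inl a) = has_nbr e1 A a.
Proof.
apply/has_nbrP/has_nbrP => [[[u|u]]|[u uA eau]]; rewrite ?inE //=; first by exists u.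
by exists (inl u); rewrite ?inE.
Qed.

Lemma has_nbr_sumr A B b : has_nbr es (sum_set A B) (inr b) = has_nbr e2 B b.
Proof.
apply/has_nbrP/has_nbrP => [[[u|u]]|[u uB ebu]]; rewrite ?inE //=; first by exists u.
by exists (inr u); rewrite ?inE.
Qed.

Lemma active_sum_set A B : active es (sum_set A B) = sum_set (active e1 A) (active e2 B).
Proof.
by apply/setP => -[a|b]; rewrite in_active !inE ?has_nbr_suml ?has_nbr_sumr isoInE negbK.
Qed.

Lemma cnbhd_suml A B a : cnbhd es (sum_set A B) (inl a) = sum_set (cnbhd e1 A a) set0.
Proof. by apply/setP => -[u|u]; rewrite !inE /= ?andbF // (inj_eq (@inl_inj _ _)). Qed.

Lemma cnbhd_sumr A B b : cnbhd es (sum_set A B) (inr b) = sum_set set0 (cnbhd e2 B b).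
Proof. by apply/setP => -[u|u]; rewrite !inE /= ?andbF // (inj_eq (@inr_inj _ _)). Qed.

Lemma after_suml A B a : active e2 B = B ->
  after es (sum_set A B) (inl a) = sum_set (after e1 A a) B.
Proof. by move=> BA; rewrite !afterE cnbhd_suml sum_setD active_sum_set setD0 BA. Qed.

Lemma after_sumr A B b : active e1 A = A ->
  after es (sum_set A B) (inr b) = sum_set A (after e2 B b).
Proof. by move=> AA; rewrite !afterE cnbhd_sumr sum_setD active_sum_set setD0 AA. Qed.

Lemma gain_suml A B a : active e2 B = B -> gain es (sum_set A B) (inl a) = gain e1 A a.
Proof.
by move=> BA; rewrite !gainE /removed after_suml // sum_setD card_sum_set setDv cards0 addn0.
Qed.

Lemma gain_sumr A B b : active e1 A = A -> gain es (sum_set A B) (inr b) = gain e2 B b.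
Proof.
by move=> AA; rewrite !gainE /removed after_sumr // sum_setD card_sum_set setDv cards0.
Qed.

Lemma legal_suml A B b a : legal cs (sum_set A B) b (inl a) = legal c1 A b a.
Proof. by rewrite /legal inE. Qed.

Lemma legal_sumr A B b y : legal cs (sum_set A B) b (inr y) = legal c2 B b y.
Proof. by rewrite /legal inE. Qed.

Lemma credit_sum_set A B : credit es cs (sum_set A B) = credit e1 c1 A + credit e2 c2 B.
Proof.
rewrite /credit big_sumType /=; congr (_ + _); apply: eq_bigl => v.
  by rewrite inE !isoInE has_nbr_suml.
by rewrite inE !isoInE has_nbr_sumr.
Qed.

End SumPosition.

Section SumMirror.
Variables (T1 T2 : finType) (e1 : rel T1) (e2 : rel T2).
Variables (c1 : T1 -> bool) (c2 : T2 -> bool).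
Hypotheses (e1_sym : symmetric e1) (e1_bip : forall x y, e1 x y -> c1 x != c1 y).
Hypotheses (e2_sym : symmetric e2) (e2_bip : forall x y, e2 x y -> c2 x != c2 y).
Variable sg : T1 -> T1.
Hypotheses (sgK : involutive sg) (sg_adj : forall x y, e1 (sg x) (sg y) = e1 x y)
  (sg_col : forall x, c1 (sg x) = ~~ c1 x) (sg_nadj : forall x, ~~ e1 x (sg x)).
Local Notation es := (sum_rel e1 e2).
Local Notation cs := (sum_col c1 c2).
Local Notation value_sum := (value es cs).
Local Notation value2 := (value e2 c2).

Section Step.
Variables (S : {set T1}) (Y : {set T2}).
Hypotheses (SA : active e1 S = S) (SI : sg_stable sg S) (YA : active e2 Y = Y).
Hypothesis IH : forall (S' : {set T1}) (Y' : {set T2}),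
  (#|S'| + #|Y'| < #|S| + #|Y|)%N ->
  active e1 S' = S' -> sg_stable sg S' -> active e2 Y' = Y' ->
  forall b, value_sum (sum_set S' Y') b = value2 Y' b.

Lemma value_sum_after_sg x b : x \in S ->
  value_sum (sum_set (after e1 (after e1 S x) (sg x)) Y) b = value2 Y b.
Proof.
move=> xS; have sxx := sg_in_after e1_sym e1_bip sgK sg_col sg_nadj SA SI xS.
apply: IH => //; [|exact: after_active|exact: sg_stable_after_sg].
by have := card_after e1 xS; have := card_after e1 sxx; lia.
Qed.

Lemma value_sum_afterr y b : y \in Y ->
  value_sum (sum_set S (after e2 Y y)) b = value2 (after e2 Y y) b.
Proof.
move=> yY; apply: IH; rewrite ?after_active //.
by have := card_after e2 yY; lia.
Qed.

Lemma value_sum_true_le : value_sum (sum_set S Y) true <= value2 Y true.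
Proof.
have [z0 Lz0|nolegal] := pickP (legal cs (sum_set S Y) true); last first.
  have noY y : ~~ legal c2 Y true y by move: (nolegal (inr y)); rewrite legal_sumr => ->.
  by rewrite !value_no_legal // => z; rewrite nolegal.
have [[x|y] Lz ->] := value_attained es Lz0.
  move: (Lz); rewrite legal_suml => /andP[xS /eqP cx].
  have sxx := sg_in_after e1_sym e1_bip sgK sg_col sg_nadj SA SI xS.
  have : value_sum (sum_set (after e1 S x) Y) false <=
         move_value es cs (sum_set (after e1 S x) Y) false (inl (sg x)).
    by apply: value_le_move_value; rewrite legal_suml /legal sxx sg_col cx.
  rewrite /move_value /= !gain_suml // !after_suml ?after_active //.
  rewrite value_sum_after_sg // (gain_after_sg e1_sym e1_bip sgK sg_adj) //; lia.
move: (Lz); rewrite legal_sumr => Ly; have /andP[yY _] := Ly.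
rewrite /move_value /= gain_sumr // after_sumr // value_sum_afterr //.
exact: (move_value_le_value e2 Ly).
Qed.

Lemma value_sum_false_ge : value2 Y false <= value_sum (sum_set S Y) false.
Proof.
have [z0 Lz0|nolegal] := pickP (legal cs (sum_set S Y) false); last first.
  have noY y : ~~ legal c2 Y false y by move: (nolegal (inr y)); rewrite legal_sumr => ->.
  by rewrite !value_no_legal // => z; rewrite nolegal.
have [[x|y] Lz ->] := value_attained es Lz0.
  move: (Lz); rewrite legal_suml => /andP[xS /eqP cx].
  have sxx := sg_in_after e1_sym e1_bip sgK sg_col sg_nadj SA SI xS.
  have : move_value es cs (sum_set (after e1 S x) Y) true (inl (sg x)) <=
         value_sum (sum_set (after e1 S x) Y) true.
    by apply: move_value_le_value; rewrite legal_suml /legal sxx sg_col cx.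
  rewrite /move_value /= !gain_suml // !after_suml ?after_active //.
  rewrite value_sum_after_sg // (gain_after_sg e1_sym e1_bip sgK sg_adj) //; lia.
move: (Lz); rewrite legal_sumr => Ly; have /andP[yY _] := Ly.
rewrite /move_value /= gain_sumr // after_sumr // value_sum_afterr //.
exact: (value_le_move_value e2 Ly).
Qed.

Lemma value_sum_true_ge y0 :
  legal c2 Y true y0 -> value2 Y true <= value_sum (sum_set S Y) true.
Proof.
move=> Ly0; have [y Ly ->] := value_attained e2 Ly0; have /andP[yY _] := Ly.
have Lz : legal cs (sum_set S Y) true (inr y) by rewrite legal_sumr.
move: (move_value_le_value es Lz).
by rewrite /move_value /= gain_sumr // after_sumr // value_sum_afterr.
Qed.

Lemma value_sum_false_le y0 :
  legal c2 Y false y0 -> value_sum (sum_set S Y) false <= value2 Y false.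
Proof.
move=> Ly0; have [y Ly ->] := value_attained e2 Ly0; have /andP[yY _] := Ly.
have Lz : legal cs (sum_set S Y) false (inr y) by rewrite legal_sumr.
move: (value_le_move_value es Lz).
by rewrite /move_value /= gain_sumr // after_sumr // value_sum_afterr.
Qed.

Lemma value_sum_step b : value_sum (sum_set S Y) b = value2 Y b.
Proof.
have le_true := value_sum_true_le; have ge_false := value_sum_false_ge.
have [y0 Ly0|noY] := pickP (legal c2 Y true).
  have [y1 Ly1] := legal_opposite e2_bip YA Ly0.
  have ge_true := value_sum_true_ge Ly0; have le_false := value_sum_false_le Ly1.
  by apply/eqP; case: (b); rewrite eq_le ?le_true ?ge_true ?le_false ?ge_false.
have SYA : active es (sum_set S Y) = sum_set S Y by rewrite active_sum_set SA YA.
have := value_right_first_le (sum_rel_sym e1_sym e2_sym) (sum_rel_bip e1_bip e2_bip) SYA.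
have Y0 : Y = set0 by apply: (no_legal_set0 e2_bip (b := true)) => // y; rewrite noY.
move: le_true ge_false; rewrite Y0 !value_set0; case: (b); lia.
Qed.

End Step.

Theorem value_sum_sg_stable S Y b : active e1 S = S -> sg_stable sg S -> active e2 Y = Y ->
  value es cs (sum_set S Y) b = value e2 c2 Y b.
Proof.
move: {2}(#|S| + #|Y|).+1 (ltnSn (#|S| + #|Y|)) => k.
elim: k S Y b => // k IH S Y b SYk SA SI YA.
apply: value_sum_step => // S' Y' ltSY SA' SI' YA' b'.
by apply: IH => //; lia.
Qed.

End SumMirror.

Lemma odd_card_symdiff (T : finType) (A B : {set T}) :
  odd #|(A :\: B) :|: (B :\: A)| = odd #|A| (+) odd #|B|.
Proof.
have disj : (A :\: B) :&: (B :\: A) = set0.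
  by apply/setP => v; rewrite !inE; case: (v \in A); case: (v \in B).
rewrite cardsU disj cards0 subn0 -(cardsID B A) -(cardsID A B) setIC !oddD.
by case: (odd #|B :&: A|); case: (odd _); case: (odd _).
Qed.

Lemma card_ord_lt m n : (m <= n)%N -> #|[set i : 'I_n | (i < m)%N]| = m.
Proof.
move=> mn; have -> : [set i : 'I_n | (i < m)%N] = widen_ord mn @: 'I_m.
  apply/setP => i; rewrite inE; apply/idP/imsetP => [im|[j _ ->]].
    by exists (Ordinal im) => //; apply: val_inj.
  exact: (ltn_ord j).
rewrite card_imset ?card_ord // => i j /(congr1 val) /=; exact: val_inj.
Qed.

Section Hypercube.
Variable n : nat.
Implicit Types (f g : hcube n).

Lemma hc_col_diff f g : hc_col g = hc_col f (+) odd #|[set i | f i != g i]|.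
Proof.
rewrite /hc_col -odd_card_symdiff.
set D := [set i | f i != g i].
have -> // : [set i | g i] = [set i | f i] :\: D :|: D :\: [set i | f i].
by apply/setP => i; rewrite /D !inE; case: (f i); case: (g i).
Qed.

Lemma hc_adj_sym : symmetric (@hc_adj n).
Proof.
move=> f g; rewrite /hc_adj (_ : [set i | f i != g i] = [set i | g i != f i]) //.
by apply/setP => i; rewrite !inE eq_sym.
Qed.

Lemma hc_adj_bip f g : hc_adj f g -> hc_col f != hc_col g.
Proof. by rewrite (hc_col_diff f g) => /eqP->; case: (hc_col f). Qed.

Definition hc_flip3 f : hcube n := [ffun i => f i (+) (i < 3)%N].

Lemma hc_flip3K : involutive hc_flip3.
Proof. by move=> f; apply/ffunP => i; rewrite !ffunE addbK. Qed.

Lemma hc_flip3_adj f g : hc_adj (hc_flip3 f) (hc_flip3 g) = hc_adj f g.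
Proof.
rewrite /hc_adj (_ : [set i | _ != _] = [set i | f i != g i]) //.
apply/setP => i; rewrite !inE !ffunE.
by case: (f i); case: (g i); case: (i < 3)%N.
Qed.

Lemma hc_flip3_dist f : [set i | f i != hc_flip3 f i] = [set i : 'I_n | (i < 3)%N].
Proof. by apply/setP => i; rewrite !inE ffunE; case: (f i); case: (i < 3)%N. Qed.

Lemma hc_has_nbr f : (0 < n)%N -> has_nbr (@hc_adj n) setT f.
Proof.
move=> n_gt0; have i0 : 'I_n := Ordinal n_gt0.
apply/has_nbrP; exists [ffun i => f i (+) (i == i0)]; rewrite ?inE // /hc_adj.
rewrite (_ : [set i | _ != _] = [set i0]) ?cards1 //; apply/setP => i.
by rewrite !inE ffunE; case: (f i); case: (i == i0).
Qed.

Lemma hc_activeT : (0 < n)%N -> active (@hc_adj n) setT = setT.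
Proof. by move=> n_gt0; apply/setP => f; rewrite in_active hc_has_nbr ?inE. Qed.

Lemma hc_creditT : (0 < n)%N -> credit (@hc_adj n) (@hc_col n) setT = 0.
Proof. by move=> n_gt0; rewrite /credit big_pred0 // => f; rewrite isoInE hc_has_nbr ?andbF. Qed.

Hypothesis n_ge3 : (3 <= n)%N.

Lemma hc_flip3_col f : hc_col (hc_flip3 f) = ~~ hc_col f.
Proof. by rewrite (hc_col_diff f) hc_flip3_dist card_ord_lt // addbT. Qed.

Lemma hc_flip3_nadj f : ~~ hc_adj f (hc_flip3 f).
Proof. by rewrite /hc_adj hc_flip3_dist card_ord_lt. Qed.

End Hypercube.

Theorem mainTheorem11 (n : nat) : (3 <= n)%N -> game_zero (@hc_adj n) (@hc_col n).
Proof.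
move=> n_ge3 X eX cX [eX_sym _ eX_bip]; have n_gt0 : (0 < n)%N by apply: leq_trans n_ge3.
have value_sum b := value_sum_sg_stable (@hc_adj_sym n) (@hc_adj_bip n) eX_sym eX_bip
  (@hc_flip3K n) (@hc_flip3_adj n) (hc_flip3_col n_ge3) (hc_flip3_nadj n_ge3) b
  (hc_activeT n_gt0) (preimsetT _) (activeK eX_sym setT).
rewrite !LsE !RsE sum_setT credit_sum_set active_sum_set hc_activeT // hc_creditT //.
by rewrite add0r !value_sum.
Qed.
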